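(* Let $A\in\mathbb{R}^{n\times n}$. (a) For every integer $k\ge0$, $(A\,\underline{\otimes}\, I)^k = (I\,\underline{\otimes}\, A)^k = \frac{1}{2^k}\sum_{i=0}^k\binom{k}{i}A^{k-i}\,\underline{\otimes}\, A^i$. (b) $\exp(A\,\underline{\oplus}\, A) = \exp(A)\,\underline{\otimes}\,\exp(A)$. (c) In general $\exp(A\,\underline{\oplus}\, B)\ne\exp(A)\,\underline{\otimes}\,\exp(B)$; i.e., there exist $n$ and $A,B\in\mathbb{R}^{n\times n}$ with $\exp(A\,\underline{\oplus}\, B)\ne\exp(A)\,\underline{\otimes}\,\exp(B)$.
   Context: Let $\underline{n}=n(n+1)/2$, $\operatorname{vec}$ column-stacking vectorization, $\otimes$ the Kronecker product, $e_1,\dots,e_n$ the standard basis. Enumerate pairs $(r,c)$, $1\le r\le c\le n$, in the order $(1,1),\dots,(1,n),(2,2),\dots,(2,n),\dots,(n,n)$ as $(r(\ell),c(\ell))$, $\ell=1,\dots,\underline{n}$; set $E_\ell=e_{r(\ell)}e_{r(\ell)}^T$ if $r(\ell)=c(\ell)$ and $E_\ell=\frac{\sqrt2}{2}(e_{r(\ell)}e_{c(\ell)}^T+e_{c(\ell)}e_{r(\ell)}^T)$ otherwise; $W_n\in\mathbb{R}^{\underline{n}\times n^2}$ has $\ell$-th row $\operatorname{vec}(E_\ell)^T$. The symmetric Kronecker product of $A,B\in\mathbb{R}^{n\times n}$ is $A\,\underline{\otimes}\, B = W_n(A\otimes B)W_n^T\in\mathbb{R}^{\underline{n}\times\underline{n}}$,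 and the symmetric Kronecker sum is $A\,\underline{\oplus}\, B = A\,\underline{\otimes}\, I + I\,\underline{\otimes}\, B$. $\exp$ is the matrix exponential. *)

From HB Require Import structures.
From mathcomp Require Import all_boot all_order all_algebra.
From mathcomp Require Import all_classical all_reals all_analysis.
Set Implicit Arguments. Unset Strict Implicit. Unset Printing Implicit Defensive.
Import Order.TTheory GRing.Theory Num.Theory.
Local Open Scope ring_scope.

Definition tri (n : nat) : nat := (n * n.+1)./2.

Lemma divn_ord_lt n (p : 'I_(n * n)) : (p %/ n < n)%N.
Proof.
case: n p => [|n] p; first by case: p.
by rewrite ltn_divLR.
Qed.
Lemma modn_ord_lt n (p : 'I_(n * n)) : (p %% n < n)%N.
Proof.
case: n p => [|n] p; first by case: p.
by rewrite ltn_mod.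
Qed.
Definition odiv n (p : 'I_(n * n)) : 'I_n := Ordinal (divn_ord_lt p).
Definition omod n (p : 'I_(n * n)) : 'I_n := Ordinal (modn_ord_lt p).

Section SymKron.
Variable R : realType.

Definition kron n (A B : 'M[R]_n) : 'M[R]_(n * n) :=
  \matrix_(p, q) (A (odiv p) (odiv q) * B (omod p) (omod q)).

(* column-stacking vectorization: vec(X)[r + n*c] = X[r,c] (0-based) *)
Definition vecc n (X : 'M[R]_n) : 'cV[R]_(n * n) :=
  \col_p X (omod p) (odiv p).

Definition sym_pairs (n : nat) : seq (nat * nat) :=
  flatten [seq [seq (r, c) | c <- iota r (n - r)] | r <- iota 0 n].

Definition E_sym n (l : nat) : 'M[R]_n :=
  let rc := nth (0%N, 0%N) (sym_pairs n) l in
  let r := rc.1 in let c := rc.2 in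
  if r == c then \matrix_(i, j) ((i == r :> nat) && (j == r :> nat))%:R
  else \matrix_(i, j) (Num.sqrt 2 / 2 *
        (((i == r :> nat) && (j == c :> nat))%:R
         + ((i == c :> nat) && (j == r :> nat))%:R)).

Definition Wn n : 'M[R]_(tri n, n * n) :=
  \matrix_(l, p) vecc (E_sym n l) p 0.

Definition symkron n (A B : 'M[R]_n) : 'M[R]_(tri n) :=
  Wn n *m kron A B *m (Wn n)^T.

Definition symsum n (A B : 'M[R]_n) : 'M[R]_(tri n) :=
  symkron A 1%:M + symkron 1%:M B.

Definition mexp m (A : 'M[R]_m) : 'M[R]_m :=
  limn (series (fun k : nat => (k`!%:R)^-1 *: A ^+ k)).

End SymKron.

(* W_n W_n^T = I and W_n^T W_n = (I + T) / 2, where T maps vec(X) to vec(X^T).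
   Hence X |-> W_n X W_n^T is multiplicative on T-invariant matrices such as
   A (x) I + I (x) A, and I (x)_s A = A (x)_s I = W_n ((A (x) I + I (x) A) / 2) W_n^T.
   Part (a) is then the binomial theorem for the commuting A (x) I and I (x) A,
   and part (b) is exp(A (x) I + I (x) A) = exp(A (x) I) exp(I (x) A)
   = exp(A) (x) exp(A), the product rule for commuting matrices being proved by
   bounding the truncated Cauchy product of the two exponential series.
   For (c), take A = 0 and B = E_12: Q = I (x)_s B has Q^2 = (B (x)_s B) / 2 <> 0
   and Q^3 = 0, so exp(A (+)_s B) = I + Q + Q^2 / 2 but exp(A) (x)_s exp(B) = I + Q. *)

From HB Require Import structures.
From mathcomp Require Import all_boot all_order all_algebra.
From mathcomp Require Import all_classical all_reals all_analysis.
From mathcomp Require Import zify ring.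
Import Order.TTheory GRing.Theory Num.Theory numFieldNormedType.Exports.
Set Implicit Arguments. Unset Strict Implicit. Unset Printing Implicit Defensive.
Local Open Scope classical_set_scope.
Local Open Scope ring_scope.

Section PairIndex.
Variable n : nat.

Lemma pair_ord_subproof (i j : 'I_n) : (i * n + j < n * n)%N.
Proof. have := ltn_ord i; have := ltn_ord j; nia. Qed.

Definition pair_ord (i j : 'I_n) : 'I_(n * n) := Ordinal (pair_ord_subproof i j).

Lemma odiv_pair i j : odiv (pair_ord i j) = i.
Proof.
apply: val_inj => /=; have n_gt0 : (0 < n)%N by case: n i {j} => [[]|].
by rewrite divnMDl // divn_small // addn0.
Qed.

Lemma omod_pair i j : omod (pair_ord i j) = j.
Proof. by apply: val_inj => /=; rewrite modnMDl modn_small. Qed.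

Lemma pair_odiv_omod p : pair_ord (odiv p) (omod p) = p.
Proof. by apply: val_inj => /=; rewrite -divn_eq. Qed.

Lemma eq_pair_ord (p q : 'I_(n * n)) :
  (p == q) = (odiv p == odiv q) && (omod p == omod q).
Proof.
apply/eqP/andP => [->//|[/eqP eq_div /eqP eq_mod]].
by rewrite -(pair_odiv_omod p) -(pair_odiv_omod q) eq_div eq_mod.
Qed.

Lemma big_pair_ord (V : nmodType) (F : 'I_(n * n) -> V) :
  \sum_(p < n * n) F p = \sum_(i < n) \sum_(j < n) F (pair_ord i j).
Proof.
rewrite pair_big /= (reindex (fun ij : 'I_n * 'I_n => pair_ord ij.1 ij.2)) //=.
exists (fun p => (odiv p, omod p)) => [[i j] _|p _] /=.
  by rewrite odiv_pair omod_pair.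
by rewrite pair_odiv_omod.
Qed.

Definition swap_ord (p : 'I_(n * n)) : 'I_(n * n) := pair_ord (omod p) (odiv p).

Lemma odiv_swap p : odiv (swap_ord p) = omod p. Proof. exact: odiv_pair. Qed.
Lemma omod_swap p : omod (swap_ord p) = odiv p. Proof. exact: omod_pair. Qed.

Lemma swap_ordK : involutive swap_ord.
Proof. by move=> p; rewrite /swap_ord odiv_swap omod_swap pair_odiv_omod. Qed.

Lemma swap_ord_inj : injective swap_ord. Proof. exact: inv_inj swap_ordK. Qed.

End PairIndex.

Section Kronecker.
Variables (R : realType) (n : nat).
Implicit Types A B C D : 'M[R]_n.

Lemma kronE A B p q : kron A B p q = A (odiv p) (odiv q) * B (omod p) (omod q).
Proof. by rewrite mxE. Qed.

Lemma mul_kron A B C D : kron A B *m kron C D = kron (A *m C) (B *m D).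
Proof.
apply/matrixP => p q; rewrite !mxE big_pair_ord big_distrl /=.
apply: eq_bigr => i _; rewrite big_distrr /=; apply: eq_bigr => j _.
by rewrite !kronE odiv_pair omod_pair; ring.
Qed.

Lemma kron_swap A B p q : kron A B (swap_ord p) (swap_ord q) = kron B A p q.
Proof. by rewrite !kronE !odiv_swap !omod_swap mulrC. Qed.

Lemma kron1 : kron (1%:M : 'M[R]_n) 1%:M = 1%:M.
Proof.
apply/matrixP => p q; rewrite kronE !mxE (eq_pair_ord p q).
by case: (odiv p == odiv q); case: (omod p == omod q); rewrite ?mulr1 ?mulr0.
Qed.

Lemma kron0l B : kron 0 B = 0.
Proof. by apply/matrixP => p q; rewrite !mxE mul0r. Qed.
Lemma kronDl A B C : kron (A + B) C = kron A C + kron B C.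
Proof. by apply/matrixP => p q; rewrite !mxE mulrDl. Qed.
Lemma kronDr A B C : kron A (B + C) = kron A B + kron A C.
Proof. by apply/matrixP => p q; rewrite !mxE mulrDr. Qed.
Lemma kronZl a A B : kron (a *: A) B = a *: kron A B.
Proof. by apply/matrixP => p q; rewrite !mxE mulrA. Qed.
Lemma kronZr a A B : kron A (a *: B) = a *: kron A B.
Proof. by apply/matrixP => p q; rewrite !mxE mulrCA. Qed.

Lemma mul_kron1 A B : kron A 1%:M *m kron 1%:M B = kron A B.
Proof. by rewrite mul_kron mulmx1 mul1mx. Qed.

Lemma kron1_comm A B : kron A 1%:M *m kron 1%:M B = kron 1%:M B *m kron A 1%:M.
Proof. by rewrite !mul_kron !mulmx1 !mul1mx. Qed.

Lemma expr_kronl A k : (kron A 1%:M) ^+ k = kron (A ^+ k) 1%:M.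
Proof.
elim: k => [|k IH]; first by rewrite !expr0 kron1.
by rewrite !exprS IH -mulmxE mul_kron mulmx1.
Qed.

Lemma expr_kronr A k : (kron 1%:M A) ^+ k = kron 1%:M (A ^+ k).
Proof.
elim: k => [|k IH]; first by rewrite !expr0 kron1.
by rewrite !exprS IH -mulmxE mul_kron mulmx1.
Qed.

End Kronecker.

Lemma sym_pairsE n :
  sym_pairs n = [seq (r, c) | r <- iota 0 n, c <- iota r (n - r)].
Proof. by []. Qed.

Lemma size_sym_pairs n : size (sym_pairs n) = tri n.
Proof.
have -> : tri n = 'C(n.+1, 2) by rewrite bin2 /= mulnC.
rewrite sym_pairsE size_allpairs_dep -bin2_sum big_nat_recl // add0n.
rewrite big_nat_rev add0n sumnE big_map -{1}(subn0 n) -/(index_iota 0 n).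
by apply: eq_big_nat => r /andP[_ lt_rn]; rewrite size_iota; lia.
Qed.

Lemma mem_sym_pairs n x : x \in sym_pairs n -> (x.1 <= x.2 < n)%N.
Proof.
rewrite sym_pairsE => /allpairsPdep [r [c [hr hc ->]]] /=.
by move: hr hc; rewrite !mem_iota; lia.
Qed.

Lemma uniq_sym_pairs n : uniq (sym_pairs n).
Proof.
rewrite sym_pairsE; apply: allpairs_uniq_dep => [|r _|[a b] [c d] _ _ /= [-> ->]] //.
- exact: iota_uniq.
- exact: iota_uniq.
Qed.

Lemma big_sym_pairs (V : nmodType) n (F : nat * nat -> V) :
  \sum_(l < tri n) F (nth (0, 0)%N (sym_pairs n) l) =
  \sum_(r < n) \sum_(c < n | (r <= c)%N) F (val r, val c).
Proof.
rewrite -(big_mkord xpredT (fun l => F (nth (0, 0)%N (sym_pairs n) l))).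
rewrite -size_sym_pairs -(big_nth (0, 0)%N xpredT F) sym_pairsE big_allpairs_dep /=.
rewrite -{1}(subn0 n) -/(index_iota 0 n) big_mkord; apply: eq_bigr => r _.
by rewrite -/(index_iota r n) big_geq_mkord.
Qed.

Section SymBasis.
Variable R : realType.

Definition kdelta (a b : nat) : R := (a == b)%:R.

Definition sym_delta (a b i j : nat) : R :=
  kdelta i a * kdelta j b + kdelta i b * kdelta j a.

(* On the diagonal [sym_delta] counts the unit entry of E_l twice, hence 1/2. *)
Definition sym_coef (r c : nat) : R := if r == c then 2^-1 else Num.sqrt 2 / 2.

Definition sym_entry (x : nat * nat) (i j : nat) : R :=
  sym_coef x.1 x.2 * sym_delta x.1 x.2 i j.

Lemma kdeltaC a b : kdelta a b = kdelta b a.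
Proof. by rewrite /kdelta eq_sym. Qed.

Lemma sym_deltaC a b i j : sym_delta a b i j = sym_delta a b j i.
Proof. by rewrite /sym_delta; ring. Qed.

Lemma sym_delta_swap a b i j : sym_delta a b i j = sym_delta i j a b.
Proof. by rewrite /sym_delta !(kdeltaC i) !(kdeltaC j); ring. Qed.

Lemma sym_coef_sq r c : sym_coef r c ^+ 2 = (2 - kdelta r c) / 4.
Proof.
rewrite /sym_coef /kdelta; case: eqP => _ /=; first by rewrite mulr1n; field.
by rewrite mulr0n subr0 expr2 mulrACA -expr2 sqr_sqrtr ?ler0n //; field.
Qed.

Lemma E_symE n l (i j : 'I_n) :
  E_sym R n l i j = sym_entry (nth (0, 0)%N (sym_pairs n) l) i j.
Proof.
rewrite /E_sym /sym_entry /sym_delta /sym_coef /kdelta.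
set r := _.1; set c := _.2; case: eqP => [<-|_]; rewrite mxE /=.
  by case: (i == r :> nat); case: (j == r :> nat); rewrite /=; field.
by case: (i == r :> nat); case: (j == r :> nat);
   case: (i == c :> nat); case: (j == c :> nat); rewrite /=; ring.
Qed.

Lemma WnE n (l : 'I_(tri n)) p :
  Wn R n l p = sym_entry (nth (0, 0)%N (sym_pairs n) l) (omod p) (odiv p).
Proof. by rewrite !mxE E_symE. Qed.

Lemma Wn_swap n l p : Wn R n l (swap_ord p) = Wn R n l p.
Proof. by rewrite !WnE odiv_swap omod_swap /sym_entry sym_deltaC. Qed.

Lemma sum_kdelta n a (F : nat -> R) : (a < n)%N ->
  \sum_(i < n) kdelta i a * F i = F a.
Proof.
move=> lt_an; rewrite (bigD1 (Ordinal lt_an)) //= big1 ?addr0.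
  by rewrite /kdelta eqxx mul1r.
by move=> i /negbTE; rewrite -val_eqE /= /kdelta => ->; rewrite mul0r.
Qed.

Lemma kdeltaM i a a' : kdelta i a * kdelta i a' = kdelta i a * kdelta a a'.
Proof. by rewrite /kdelta; case: eqP => [->|]; rewrite ?mul0r. Qed.

Lemma sum_kdelta2 n a b a' b' : (a < n)%N -> (b < n)%N ->
  \sum_(i < n) \sum_(j < n) kdelta i a * kdelta j b * (kdelta i a' * kdelta j b') =
  kdelta a a' * kdelta b b'.
Proof.
move=> lt_an lt_bn.
under eq_bigr => i _ do under eq_bigr => j _ do rewrite mulrACA !kdeltaM -mulrA.
under eq_bigr => i _ do rewrite -!mulr_sumr (sum_kdelta (fun=> kdelta b b')) //.
exact: (sum_kdelta (fun=> kdelta a a' * kdelta b b')).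
Qed.

Lemma sum_sym_delta n a b a' b' : (a < n)%N -> (b < n)%N ->
  \sum_(i < n) \sum_(j < n) sym_delta a b i j * sym_delta a' b' i j =
  2 * sym_delta a b a' b'.
Proof.
move=> lt_an lt_bn; rewrite /sym_delta.
under eq_bigr => i _ do under eq_bigr => j _ do rewrite mulrDl !mulrDr.
under eq_bigr => i _ do rewrite !big_split.
rewrite !big_split /= !sum_kdelta2 // (kdeltaC a') (kdeltaC b') (kdeltaC a' b) (kdeltaC b' a).
ring.
Qed.

Lemma sym_entry_orthonormal n x y : x \in sym_pairs n -> y \in sym_pairs n ->
  \sum_(i < n) \sum_(j < n) sym_entry x i j * sym_entry y i j = (x == y)%:R.
Proof.
case: x y => [r c] [r' c'] /mem_sym_pairs /= le_rcn /mem_sym_pairs /= le_rcn'.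
rewrite /sym_entry /=.
under eq_bigr => i _ do under eq_bigr => j _ do rewrite mulrACA.
under eq_bigr => i _ do rewrite -mulr_sumr.
rewrite -mulr_sumr sum_sym_delta; try lia.
case: eqP => [[<- <-]|ne].
  rewrite -expr2 sym_coef_sq /sym_delta /kdelta !eqxx eq_sym.
  by case: eqP => _ /=; rewrite ?(mulr1n, mulr0n); field.
rewrite /sym_delta /kdelta -!natrM !mulnb.
have /negbTE-> : ~~ ((r' == r) && (c' == c)).
  by apply/andP => -[/eqP e1 /eqP e2]; apply: ne; rewrite e1 e2.
have /negbTE-> : ~~ ((r' == c) && (c' == r)).
  by apply/andP => -[/eqP e1 /eqP e2]; apply: ne; congr pair; lia.
by rewrite /= mulr0n addr0 !mulr0.
Qed.

Lemma big_triangle_sym n (g : nat -> nat -> R) : (forall r c, g r c = g c r) ->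
  \sum_(r < n) \sum_(c < n | (r <= c)%N) (2 - kdelta r c) * g r c =
  \sum_(r < n) \sum_(c < n) g r c.
Proof.
move=> gC; pose ind (b : bool) : R := b%:R.
have split_full : \sum_(r < n) \sum_(c < n) g r c =
    \sum_(r < n) \sum_(c < n) (ind (c < r)%N * g r c + ind (r <= c)%N * g r c).
  apply: eq_bigr => r _; apply: eq_bigr => c _; rewrite -mulrDl /ind.
  by case: ltnP; rewrite /= ?(mulr1n, mulr0n) ?(add0r, addr0) mul1r.
have lower_upper : \sum_(r < n) \sum_(c < n) ind (c < r)%N * g r c =
    \sum_(r < n) \sum_(c < n) ind (r < c)%N * g r c.
  by rewrite exchange_big; apply: eq_bigr => r _; apply: eq_bigr => c _; rewrite gC.
rewrite split_full; under [RHS]eq_bigr do rewrite big_split /=.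
rewrite big_split /= lower_upper -big_split /=; apply: eq_bigr => r _.
rewrite -big_split big_mkcond /=; apply: eq_bigr => c _; rewrite /ind /kdelta.
by case: ltngtP => //= _; rewrite ?(mulr1n, mulr0n); ring.
Qed.

Lemma Wn_mul_tr n : Wn R n *m (Wn R n)^T = 1%:M.
Proof.
apply/matrixP => l m; rewrite [LHS]mxE [RHS]mxE big_pair_ord.
under eq_bigr => i _ do under eq_bigr => j _ do
  rewrite [(Wn R n)^T _ _]mxE !WnE odiv_pair omod_pair.
rewrite exchange_big /= sym_entry_orthonormal ?mem_nth ?size_sym_pairs //.
by rewrite nth_uniq ?size_sym_pairs ?uniq_sym_pairs.
Qed.

Lemma eq_ord_kdelta n (p q : 'I_(n * n)) :
  ((p == q)%:R : R) = kdelta (odiv p) (odiv q) * kdelta (omod p) (omod q).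
Proof. by rewrite eq_pair_ord -!val_eqE /kdelta -natrM mulnb. Qed.

Definition swap_mx n : 'M[R]_(n * n) := \matrix_(p, q) (swap_ord p == q)%:R.

Lemma tr_Wn_mul n : (Wn R n)^T *m Wn R n = 2^-1 *: (1%:M + swap_mx n).
Proof.
apply/matrixP => p q; rewrite [LHS]mxE.
under eq_bigr => l _ do rewrite [(Wn R n)^T _ _]mxE !WnE.
rewrite (big_sym_pairs n (fun x => sym_entry x _ _ * sym_entry x _ _)).
under eq_bigr => r _ do under eq_bigr => c _ do
  rewrite /sym_entry [(_, _).1]/= [(_, _).2]/= mulrACA -expr2 sym_coef_sq mulrAC
          (sym_delta_swap r) (sym_delta_swap r c (omod q)).
under eq_bigr => r _ do rewrite -mulr_suml.
rewrite -mulr_suml (@big_triangle_sym n (fun r c =>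
  sym_delta (omod p) (odiv p) r c * sym_delta (omod q) (odiv q) r c)) => [|r c];
  last by rewrite !(sym_deltaC _ _ r).
rewrite sum_sym_delta // !mxE !eq_ord_kdelta odiv_swap omod_swap /sym_delta.
by rewrite !(kdeltaC (omod q)) !(kdeltaC (odiv q)); field.
Qed.

End SymBasis.

Lemma exprZ_mx (R : comPzRingType) m a (B : 'M[R]_m) k : (a *: B) ^+ k = a ^+ k *: B ^+ k.
Proof.
elim: k => [|k IH]; first by rewrite !expr0 scale1r.
by rewrite !exprS IH -!mulmxE -scalemxAr -scalemxAl scalerA (mulrC (a ^+ k)).
Qed.

Section SymConjugation.
Variables (R : realType) (n : nat).
Local Notation W := (Wn R n).
Local Notation T := (swap_mx R n).
Implicit Types (A B : 'M[R]_n) (S : 'M[R]_(n * n)).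

Definition swap_invariant S := forall p q, S (swap_ord p) (swap_ord q) = S p q.

Lemma mul_swap_mx m (S : 'M[R]_(n * n, m)) p q : (T *m S) p q = S (swap_ord p) q.
Proof.
rewrite mxE (bigD1 (swap_ord p)) //= big1 => [|k /negbTE]; last first.
  by rewrite mxE eq_sym => ->; rewrite mul0r.
by rewrite mxE eqxx mul1r addr0.
Qed.

Lemma mulmx_swap m (S : 'M[R]_(m, n * n)) p q : (S *m T) p q = S p (swap_ord q).
Proof.
rewrite mxE (bigD1 (swap_ord q)) //= big1 => [|k /negbTE]; last first.
  by rewrite mxE -(inj_eq (@swap_ord_inj n)) swap_ordK => ->; rewrite mulr0.
by rewrite mxE swap_ordK eqxx mulr1 addr0.
Qed.

Lemma swap_mx_comm S : swap_invariant S -> T *m S = S *m T.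
Proof.
move=> S_inv; apply/matrixP => p q.
by rewrite mul_swap_mx mulmx_swap -[in LHS](swap_ordK q) S_inv.
Qed.

Lemma tr_Wn_mul_comm S : swap_invariant S -> W^T *m W *m S = S *m (W^T *m W).
Proof.
move=> S_inv; rewrite tr_Wn_mul -scalemxAl -scalemxAr mulmxDl mulmxDr.
by rewrite mul1mx mulmx1 swap_mx_comm.
Qed.

Lemma conj_Wn_exp S k : swap_invariant S ->
  (W *m S *m W^T) ^+ k = W *m S ^+ k *m W^T.
Proof.
move=> S_inv; elim: k => [|k IH]; first by rewrite !expr0 mulmx1 Wn_mul_tr.
rewrite exprSr IH exprSr -!mulmxE.
transitivity (W *m S ^+ k *m (W^T *m W *m S) *m W^T); first by rewrite !mulmxA.
by rewrite tr_Wn_mul_comm // !mulmxA -(mulmxA _ W W^T) Wn_mul_tr mulmx1.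
Qed.

Lemma Wn_mul_swap : W *m T = W.
Proof. by apply/matrixP => l p; rewrite mulmx_swap Wn_swap. Qed.

Lemma swap_mul_trWn : T *m W^T = W^T.
Proof. by apply/matrixP => p l; rewrite mul_swap_mx ![W^T _ _]mxE Wn_swap. Qed.

Lemma swap_conj_kron A B : T *m kron A B *m T = kron B A.
Proof. by apply/matrixP => p q; rewrite mulmx_swap mul_swap_mx kron_swap. Qed.

Lemma symkronC A B : symkron A B = symkron B A.
Proof.
by rewrite /symkron -[kron B A]swap_conj_kron !mulmxA Wn_mul_swap -!mulmxA swap_mul_trWn.
Qed.

Lemma kron_sum_swap_invariant A : swap_invariant (kron A 1%:M + kron 1%:M A).
Proof. by move=> p q; rewrite [LHS]mxE [RHS]mxE !kron_swap addrC. Qed.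

Lemma swap_invariantZ a S : swap_invariant S -> swap_invariant (a *: S).
Proof. by move=> S_inv p q; rewrite !mxE S_inv. Qed.

Lemma symkron1l A :
  symkron 1%:M A = W *m (2^-1 *: (kron A 1%:M + kron 1%:M A)) *m W^T.
Proof.
rewrite -scalemxAr -scalemxAl mulmxDr mulmxDl -/(symkron A 1%:M) -/(symkron 1%:M A).
by rewrite symkronC -mulr2n -scalerMnr scalerMnl -mulr_natr mulVf ?pnatr_eq0 ?scale1r.
Qed.

Lemma expr_symkron1 A k :
  (symkron 1%:M A) ^+ k =
  (2 ^+ k)^-1 *: \sum_(i < k.+1) 'C(k, i)%:R *: symkron (A ^+ (k - i)) (A ^+ i).
Proof.
have comm_kron : GRing.comm (kron A 1%:M) (kron 1%:M A).
  by rewrite /GRing.comm -!mulmxE kron1_comm.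
rewrite symkron1l conj_Wn_exp; last exact/swap_invariantZ/kron_sum_swap_invariant.
rewrite exprZ_mx exprVn [(kron _ _ + _) ^+ k]exprDn_comm //.
rewrite -scalemxAr -scalemxAl mulmx_sumr mulmx_suml.
congr (_ *: _); apply: eq_bigr => i _.
rewrite -mulmxE expr_kronl expr_kronr mul_kron1 -scaler_nat.
by rewrite -scalemxAr -scalemxAl.
Qed.

End SymConjugation.

Section TruncatedCauchyProduct.
Variable V : pzRingType.

Lemma big_antidiagonal (G : nat -> nat -> V) K :
  \sum_(0 <= s < K) \sum_(0 <= i < s.+1) G i (s - i)%N =
  \sum_(0 <= i < K) \sum_(0 <= j < K - i) G i j.
Proof.
elim: K => [|K IH]; first by rewrite !big_geq.
rewrite big_nat_recr //= IH [RHS]big_nat_recr //= subSnn big_nat1.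
rewrite [in LHS]big_nat_recr //= subnn addrA -big_split /=; congr (_ + _).
apply: eq_big_nat => i /andP[_ lt_iK].
by rewrite subSn 1?ltnW // big_nat_recr.
Qed.

Definition exp_partial (w : nat -> V) K X := \sum_(0 <= k < K) w k * X ^+ k.

Lemma exp_partial_mul (w : nat -> V) X Y K :
  (forall k Z, w k * Z = Z * w k) ->
  (forall i j, w (i + j)%N *+ 'C(i + j, i) = w i * w j) ->
  GRing.comm X Y ->
  exp_partial w K X * exp_partial w K Y - exp_partial w K (X + Y) =
  \sum_(0 <= i < K) \sum_(K - i <= j < K) w i * w j * (X ^+ i * Y ^+ j).
Proof.
move=> w_central w_binomial XY.
have commXY a b : X ^+ a * Y ^+ b = Y ^+ b * X ^+ a.
  by apply/commr_sym/commrX/commr_sym/commrX.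
have sumD : exp_partial w K (X + Y) =
    \sum_(0 <= s < K) \sum_(0 <= i < s.+1) w i * w (s - i)%N * (X ^+ i * Y ^+ (s - i)).
  apply: eq_bigr => s _; rewrite addrC exprDn_comm; last exact: commr_sym.
  rewrite big_distrr /= big_mkord; apply: eq_bigr => i _.
  rewrite mulrnAr -mulrnAl -commXY -w_binomial subnKC //.
  exact/ltnSE/ltn_ord.
have mul : exp_partial w K X * exp_partial w K Y =
    \sum_(0 <= i < K) \sum_(0 <= j < K) w i * w j * (X ^+ i * Y ^+ j).
  rewrite /exp_partial big_distrl /=; apply: eq_bigr => i _.
  rewrite big_distrr /=; apply: eq_bigr => j _.
  by rewrite -!mulrA (mulrA (X ^+ i)) -w_central !mulrA.
rewrite mul sumD (big_antidiagonal (fun i j => w i * w j * (X ^+ i * Y ^+ j))).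
rewrite -sumrB; apply: eq_bigr => i _.
by rewrite (@big_cat_nat _ _ _ (K - i)) ?leq_subr //= addrAC subrr add0r.
Qed.

End TruncatedCauchyProduct.

Section MatrixNorm.
Variable R : realType.

Lemma normmx_entry m1 m2 (X : 'M[R]_(m1, m2)) i j : `|X i j| <= `|X|.
Proof.
rewrite [leRHS]/Num.Def.normr /= mx_normrE; apply/bigmax_geP; right; by exists (i, j).
Qed.

Lemma normmx_le m1 m2 (X : 'M[R]_(m1, m2)) c : 0 <= c ->
  (forall i j, `|X i j| <= c) -> `|X| <= c.
Proof.
move=> c_ge0 X_le; rewrite [leLHS]/Num.Def.normr /= mx_normrE.
by apply: bigmax_le => // -[i j] _; exact: X_le.
Qed.

Lemma normmx_mul m1 k m2 (X : 'M[R]_(m1, k)) (Y : 'M[R]_(k, m2)) :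
  `|X *m Y| <= k%:R * `|X| * `|Y|.
Proof.
apply: normmx_le => [|i j]; first by rewrite !mulr_ge0.
rewrite mxE; apply: le_trans (ler_norm_sum _ _ _) _.
apply: le_trans (_ : \sum_(t < k) `|X| * `|Y| <= _); last first.
  by rewrite sumr_const card_ord -[in leLHS]mulr_natl mulrA.
by apply: ler_sum => t _; rewrite normrM ler_pM ?normmx_entry.
Qed.

Lemma normmx_kron n (A B : 'M[R]_n) : `|kron A B| <= `|A| * `|B|.
Proof.
apply: normmx_le => [|p q]; first by rewrite mulr_ge0.
by rewrite kronE normrM ler_pM ?normmx_entry.
Qed.

Lemma normmx1 m : `|(1%:M : 'M[R]_m)| <= 1.
Proof. by apply: normmx_le => // i j; rewrite mxE; case: eqP; rewrite ?normr1 ?normr0. Qed.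

Lemma normmx_exp m (X : 'M[R]_m) k : `|X ^+ k| <= (m%:R * `|X|) ^+ k.
Proof.
elim: k => [|k IH]; first by rewrite !expr0 normmx1.
rewrite !exprS -mulmxE; apply: le_trans (normmx_mul _ _) _.
by rewrite ler_wpM2l ?mulr_ge0.
Qed.

End MatrixNorm.

Section Limits.
Variable R : realType.

Lemma cvg_norm_bound (V : normedModType R) (u : nat -> V) (l : V) (b : nat -> R) :
  (forall K, `|u K - l| <= b K) -> b @ \oo --> 0 -> u @ \oo --> l.
Proof.
move=> u_le b0; apply/subr_cvg0/norm_cvg0P.
apply: (squeeze_cvgr _ (cvg_cst 0) b0); near=> K.
by rewrite normr_ge0 u_le.
Unshelve. all: by end_near. Qed.

Lemma cvg_dist0 (V : normedModType R) (u : nat -> V) (l : V) :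
  u @ \oo --> l -> (fun K => `|u K - l|) @ \oo --> (0 : R).
Proof. by move=> /subr_cvg0/norm_cvg0P. Qed.

Lemma cvg_mulmx m1 k m2 (u : nat -> 'M[R]_(m1, k)) (v : nat -> 'M[R]_(k, m2))
    (a : 'M[R]_(m1, k)) (b : 'M[R]_(k, m2)) :
  u @ \oo --> a -> v @ \oo --> b -> (fun K => u K *m v K) @ \oo --> a *m b.
Proof.
move=> ua vb; apply: (@cvg_norm_bound _ _ _
  (fun K => k%:R * `|u K - a| * `|v K| + k%:R * `|a| * `|v K - b|)).
  move=> K; have -> : u K *m v K - a *m b = (u K - a) *m v K + a *m (v K - b).
    by rewrite mulmxBl mulmxBr addrA subrK.
  by apply: le_trans (ler_normD _ _) _; rewrite lerD ?normmx_mul.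
have lim0 := cvgD (cvgM (cvgM (cvg_cst (k%:R : R)) (cvg_dist0 ua)) (cvg_norm vb))
             (cvgM (cvg_cst (k%:R * `|a| : R)) (cvg_dist0 vb)).
by rewrite mulr0 mul0r add0r mulr0 in lim0; exact: lim0.
Qed.

Lemma cvg_bounded_additive (U V : normedModType R) (f : U -> V) (C : R)
    (u : nat -> U) (l : U) :
  {morph f : x y / x - y} -> (forall x, `|f x| <= C * `|x|) ->
  u @ \oo --> l -> (fun K => f (u K)) @ \oo --> f l.
Proof.
move=> fB f_le ul; apply: (@cvg_norm_bound _ _ _ (fun K => C * `|u K - l|)).
  by move=> K; rewrite -fB.
by have lim0 := cvgM (cvg_cst C) (cvg_dist0 ul); rewrite mulr0 in lim0; exact: lim0.
Qed.

End Limits.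

Section MatrixExponential.
Variable R : realType.

Definition exp_term m (A : 'M[R]_m) k := (k`!%:R)^-1 *: A ^+ k.

Lemma normmx_exp_term m (A : 'M[R]_m) k : `|exp_term A k| <= exp_coeff (m%:R * `|A|) k.
Proof.
rewrite normrZ /exp_coeff /= mulrC ger0_norm ?invr_ge0 ?ler0n //.
by rewrite ler_wpM2r ?invr_ge0 ?ler0n ?normmx_exp.
Qed.

Lemma exp_series_cvg m (A : 'M[R]_m) : series (exp_term A) @ \oo --> mexp A.
Proof.
suff : cvgn (series (exp_term A)) by [].
apply/cauchy_cvgP/cauchy_seriesP => e e_gt0.
have /cauchy_cvgP/cauchy_seriesP/(_ e e_gt0) := is_cvg_series_exp_coeff (m%:R * `|A|).
apply: filterS => -[a b] /= exp_small; apply: le_lt_trans exp_small.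
apply: le_trans (ler_norm_sum _ _ _) (le_trans _ (ler_norm _)).
by apply: ler_sum => k _; exact: normmx_exp_term.
Qed.

Lemma mexp_map m p (f : 'M[R]_m -> 'M[R]_p) (C : R) X Y :
  {morph f : x y / x + y} -> (forall a x, f (a *: x) = a *: f x) ->
  (forall x, `|f x| <= C * `|x|) -> (forall k, f (X ^+ k) = Y ^+ k) ->
  f (mexp X) = mexp Y.
Proof.
move=> fD fZ f_le fX.
have f0 : f 0 = 0 by rewrite -(scale0r (0 : 'M[R]_m)) fZ scale0r.
have fB : {morph f : x y / x - y} by move=> x y; rewrite -scaleN1r fD fZ scaleN1r.
have seriesE : series (exp_term Y) = (fun K => f (series (exp_term X) K)).
  apply/funext => K; rewrite /series /= (big_morph f fD f0).
  by apply: eq_bigr => k _; rewrite /exp_term fZ fX.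
apply/esym/cvg_lim; first exact: norm_hausdorff.
by rewrite seriesE; apply: (cvg_bounded_additive fB f_le); exact: exp_series_cvg.
Qed.

Definition inv_fact (k : nat) : R := (k`!%:R)^-1.

Lemma inv_factD i j : inv_fact (i + j) *+ 'C(i + j, i) = inv_fact i * inv_fact j.
Proof.
have fact_neq0 k : (k`!%:R : R) != 0 by rewrite pnatr_eq0 -lt0n fact_gt0.
have bin_neq0 : ('C(i + j, i)%:R : R) != 0 by rewrite pnatr_eq0 -lt0n bin_gt0 leq_addr.
have := bin_fact (leq_addr j i); rewrite addKn => fact_bin.
rewrite /inv_fact -mulr_natr -fact_bin !natrM.
by field; rewrite bin_neq0 !fact_neq0.
Qed.

Lemma exp_partial_inv_fact_cvg (x : R) :
  exp_partial inv_fact ^~ x @ \oo --> expR x.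
Proof.
have -> : exp_partial inv_fact ^~ x = series (exp_coeff x).
  by apply/funext => K; apply: eq_bigr => k _; rewrite /inv_fact /exp_coeff /= mulrC.
exact: is_cvg_series_exp_coeff.
Qed.

Lemma normmx_exp_series_defect m (A B : 'M[R]_m) K : A *m B = B *m A ->
  `|series (exp_term A) K *m series (exp_term B) K - series (exp_term (A + B)) K|
  <= m%:R * (exp_partial inv_fact K (m%:R * `|A|) * exp_partial inv_fact K (m%:R * `|B|)
             - exp_partial inv_fact K (m%:R * `|A| + m%:R * `|B|)).
Proof.
move=> AB; pose w k : 'M[R]_m := (inv_fact k)%:M.
have w_central k Z : w k * Z = Z * w k by rewrite -!mulmxE scalar_mxC.
have w_binomial i j : w (i + j)%N *+ 'C(i + j, i) = w i * w j.
  by rewrite /w -raddfMn /= inv_factD -mulmxE scalar_mxM.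
have seriesE X : series (exp_term X) K = exp_partial w K X.
  by apply: eq_bigr => k _; rewrite -mulmxE mul_scalar_mx.
rewrite !seriesE mulmxE exp_partial_mul //.
rewrite exp_partial_mul; [|move=> k Z; exact: mulrC|exact: inv_factD|exact: mulrC].
rewrite mulr_sumr; apply: le_trans (ler_norm_sum _ _ _) (ler_sum _ _) => i _.
rewrite mulr_sumr; apply: le_trans (ler_norm_sum _ _ _) (ler_sum _ _) => j _.
rewrite /w -mulmxE -scalar_mxM mul_scalar_mx normrZ ger0_norm; last first.
  by rewrite mulr_ge0 ?invr_ge0 ?ler0n.
rewrite mulrCA ler_wpM2l ?mulr_ge0 ?invr_ge0 ?ler0n //.
apply: le_trans (normmx_mul _ _) _; rewrite -mulrA ler_wpM2l //.
by rewrite ler_pM ?normmx_exp.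
Qed.

Lemma mexpD m (A B : 'M[R]_m) : A *m B = B *m A -> mexp (A + B) = mexp A *m mexp B.
Proof.
move=> AB; set a := m%:R * `|A|; set b := m%:R * `|B|.
pose real_defect K := exp_partial inv_fact K a * exp_partial inv_fact K b
                      - exp_partial inv_fact K (a + b).
have real_defect0 : real_defect @ \oo --> 0.
  have lim := cvgB (cvgM (exp_partial_inv_fact_cvg (x := a))
                         (exp_partial_inv_fact_cvg (x := b)))
                   (exp_partial_inv_fact_cvg (x := a + b)).
  by rewrite -expRD subrr in lim; exact: lim.
pose L := mexp A *m mexp B.
have defect_le K : `|series (exp_term (A + B)) K - L| <=
    `|series (exp_term A) K *m series (exp_term B) K - L| + m%:R * real_defect K.
  rewrite -[X in `|X - L|](subKr (series (exp_term A) K *m series (exp_term B) K)).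
  rewrite addrAC; apply: le_trans (ler_normB _ _) _.
  by rewrite lerD2l normmx_exp_series_defect.
apply: cvg_lim; first exact: norm_hausdorff.
apply: cvg_norm_bound defect_le _.
have lim := cvgD
  (cvg_dist0 (cvg_mulmx (exp_series_cvg (A := A)) (exp_series_cvg (A := B))))
  (cvgM (cvg_cst (m%:R : R)) real_defect0).
by rewrite mulr0 addr0 in lim; exact: lim.
Qed.

End MatrixExponential.

Section SymmetricExponential.
Variables (R : realType) (n : nat).
Local Notation W := (Wn R n).
Implicit Types A : 'M[R]_n.

Lemma mexp_kronl A : mexp (kron A 1%:M) = kron (mexp A) 1%:M.
Proof.
symmetry; apply: (mexp_map (f := fun X => kron X 1%:M) (C := 1) (X := A)) => [X Y|a X|X|k].
- exact: kronDl.
- exact: kronZl.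
- by rewrite mul1r (le_trans (normmx_kron _ _)) // ler_piMr ?normmx1.
- exact/esym/expr_kronl.
Qed.

Lemma mexp_kronr A : mexp (kron 1%:M A) = kron 1%:M (mexp A).
Proof.
symmetry; apply: (mexp_map (f := fun X => kron 1%:M X) (C := 1) (X := A)) => [X Y|a X|X|k].
- exact: kronDr.
- exact: kronZr.
- by rewrite mul1r (le_trans (normmx_kron _ _)) // ler_piMl ?normmx1.
- exact/esym/expr_kronr.
Qed.

Lemma mexp_conj_Wn (S : 'M[R]_(n * n)) : swap_invariant S ->
  mexp (W *m S *m W^T) = W *m mexp S *m W^T.
Proof.
move=> S_inv; set C := (n * n)%:R * (n * n)%:R * `|W| * `|W^T|.
symmetry; apply: (mexp_map (f := fun X => W *m X *m W^T) (C := C) (X := S)) => [X Y|a X|X|k].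
- by rewrite mulmxDr mulmxDl.
- by rewrite -scalemxAr -scalemxAl.
- apply: le_trans (normmx_mul _ _) _.
  have -> : C * `|X| = (n * n)%:R * ((n * n)%:R * `|W| * `|X|) * `|W^T|.
    by rewrite /C; ring.
  by rewrite ler_wpM2r // ler_wpM2l // normmx_mul.
- exact/esym/conj_Wn_exp.
Qed.

Lemma mexp_symsum A : mexp (symsum A A) = symkron (mexp A) (mexp A).
Proof.
have -> : symsum A A = W *m (kron A 1%:M + kron 1%:M A) *m W^T.
  by rewrite /symsum /symkron mulmxDr mulmxDl.
rewrite mexp_conj_Wn; last exact: kron_sum_swap_invariant.
by rewrite mexpD ?kron1_comm // mexp_kronl mexp_kronr mul_kron1.
Qed.

End SymmetricExponential.

Section Counterexample.
Variable R : realType.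

Lemma mexp_cube0 m (X : 'M[R]_m) : X ^+ 3 = 0 -> mexp X = 1 + X + 2^-1 *: X ^+ 2.
Proof.
move=> X3; have Xk k : (3 <= k)%N -> exp_term X k = 0.
  by move=> le3k; rewrite /exp_term -(subnKC le3k) exprD X3 mul0r scaler0.
have -> : 1 + X + 2^-1 *: X ^+ 2 = series (exp_term X) 3.
  rewrite /series /= !big_nat_recr //= big_geq // add0r /exp_term.
  by rewrite !factS fact0 /= invr1 expr0 expr1 !scale1r.
apply: lim_near_cst; first exact: norm_hausdorff.
exists 3%N => // K /= le3K.
rewrite /series /= (big_cat_nat _ le3K) //= [X in _ + X]big1_seq ?addr0 //.
by move=> k /andP[_]; rewrite mem_index_iota => /andP[/Xk].
Qed.

Lemma symkron0l m (B : 'M[R]_m) : symkron 0 B = 0.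
Proof. by rewrite /symkron kron0l mulmx0 mul0mx. Qed.

Lemma symkron0r m (A : 'M[R]_m) : symkron A 0 = 0.
Proof. by rewrite symkronC symkron0l. Qed.

Lemma symkronDr m (A B C : 'M[R]_m) : symkron A (B + C) = symkron A B + symkron A C.
Proof. by rewrite /symkron kronDr mulmxDr mulmxDl. Qed.

Lemma symkron1 m : symkron (1%:M : 'M[R]_m) 1%:M = 1%:M.
Proof. by rewrite /symkron kron1 mulmx1 Wn_mul_tr. Qed.

Definition E01 : 'M[R]_2 := delta_mx 0 1.

Lemma E01_sq : E01 ^+ 2 = 0.
Proof. by rewrite expr2 -mulmxE mul_delta_mx_cond. Qed.

Lemma E01_exp k : (2 <= k)%N -> E01 ^+ k = 0.
Proof. by move=> le2k; rewrite -(subnKC le2k) exprD E01_sq mul0r. Qed.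

Lemma sym_pairs2 : sym_pairs 2 = [:: (0, 0); (0, 1); (1, 1)]%N.
Proof. by []. Qed.

(* Indices 0 and 2 of [sym_pairs 2] are the diagonal pairs (0, 0) and (1, 1). *)
Lemma symkron_E01_entry :
  symkron E01 E01 (@Ordinal (tri 2) 0 isT) (@Ordinal (tri 2) 2 isT) = 1.
Proof.
rewrite /symkron mxE big_pair_ord.
under eq_bigr => i _ do under eq_bigr => j _ do
  rewrite mxE big_pair_ord [(Wn R 2)^T _ _]mxE WnE odiv_pair omod_pair.
under eq_bigr => i _ do under eq_bigr => j _ do under eq_bigr => i' _ do
  under eq_bigr => j' _ do rewrite WnE kronE !odiv_pair !omod_pair.
rewrite sym_pairs2 !big_ord_recr !big_ord0 /= !mxE /=.
by rewrite /sym_entry /sym_delta /sym_coef /kdelta /=; field.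
Qed.

Lemma symsum_mexp_neq :
  mexp (symsum 0 E01) <> symkron (mexp 0) (mexp E01).
Proof.
set Q := symkron 1%:M E01.
have Q_sq : Q ^+ 2 = 2^-1 *: symkron E01 E01.
  rewrite expr_symkron1 !big_ord_recr big_ord0 /= subn0 subnn subSnn E01_sq.
  rewrite symkron0l (symkronC (E01 ^+ 0)) symkron0l expr1 bin1 !scaler0 !add0r addr0.
  by rewrite scalerA; congr (_ *: _); field.
have Q_cube : Q ^+ 3 = 0.
  rewrite expr_symkron1 big1 ?scaler0 // => i _.
  have [/E01_exp->|lt_i] := leqP 2 (3 - i); first by rewrite symkron0l scaler0.
  by rewrite (@E01_exp i) ?symkron0r ?scaler0 //; lia.
rewrite /symsum symkron0l add0r -/Q mexp_cube0 // (mexp_cube0 (X := 0)) ?expr0n //=.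
rewrite (mexp_cube0 (X := E01)) ?E01_exp // !scaler0 !addr0.
rewrite symkronDr symkron1 -/Q => exp_eq.
have /matrixP/(_ (@Ordinal (tri 2) 0 isT) (@Ordinal (tri 2) 2 isT)) :
    2^-1 *: Q ^+ 2 = 0.
  by apply: (@addrI _ (1 + Q)); rewrite addr0.
rewrite Q_sq scalerA [X in X = _]mxE symkron_E01_entry mxE mulr1 => /eqP.
by rewrite mulf_eq0 invr_eq0 pnatr_eq0.
Qed.

End Counterexample.

Theorem proposition8 (R : realType) :
  (forall (n : nat) (A : 'M[R]_n),
     (forall k : nat,
        (symkron A 1%:M) ^+ k = (symkron 1%:M A) ^+ k /\
        (symkron 1%:M A) ^+ k =
          (2 ^+ k)^-1 *: \sum_(i < k.+1) ('C(k, i))%:R *: symkron (A ^+ (k - i)) (A ^+ i))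
     /\ mexp (symsum A A) = symkron (mexp A) (mexp A))
  /\ (exists (n : nat) (A B : 'M[R]_n), mexp (symsum A B) <> symkron (mexp A) (mexp B)).
Proof.
split; last by exists 2%N, 0, (E01 R); exact: symsum_mexp_neq.
move=> n A; split; last exact: mexp_symsum.
by move=> k; rewrite symkronC; split => //; exact: expr_symkron1.
Qed.
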